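(* Let $B_1$ and $B_2$ be rook equivalent Ferrers boards, both written with $n$ columns, such that $\{B_1,B_2\}$ is an edge of the rook equivalence graph. Then the root vectors $\xi(B_1)$ and $\xi(B_2)$ differ only in two positions, whose entries are swapped. That is, if $\xi(B_1)=\langle z_1,\ldots,z_{i_1},\ldots,z_{i_2},\ldots,z_n\rangle$ then $\xi(B_2)=\langle z_1,\ldots,z_{i_2},\ldots,z_{i_1},\ldots,z_n\rangle$ for some $1\le i_1<i_2\le n$ with $z_{i_1}\neq z_{i_2}$.
   Context: A Ferrers board is given by a weakly increasing sequence of non-negative integers $B=(b_1,\ldots,b_n)$ of column heights; it is the set of unit cells in the first quadrant lying in column $i$ and rows $1,\ldots,b_i$. Prepending columns of height $0$ on the left does not change the board, and boards are compared using the same number of columns by such padding. A placement of $k$ rooks on $B$ is a set of $k$ cells of $B$ no two in the same row or column; $r_k(B)$ is the number of such placements. Two boards are rook equivalent ($B_1\equiv B_2$) if $r_k(B_1)=r_k(B_2)$ for all $k\ge 0$. The root vector of $B=(b_1,\ldots,b_n)$ is $\xi(B)=\langle 0-b_1,1-b_2,\ldots,(n-1)-b_n\rangle$. The rook equivalence graph of the class of $B$ has as vertices all Ferrers boards rook equivalent to $B$, and $\{B_1,B_2\}$ is an edge iff, written with the same number of columns, $B_1$ and $B_2$ differ in exactly two columns $i$ and $j$, where $B_1$ has $k$ more cells than $B_2$ in column $i$ and $k$ fewer cells than $B_2$ in column $j$, for some $k>0$ (i.e. one is obtained from the other by moving $k$ cells from the top of one column to the top of another). *)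

From mathcomp Require Import all_boot all_order all_algebra.
Set Implicit Arguments. Unset Strict Implicit. Unset Printing Implicit Defensive.
Import GRing.Theory Num.Theory.

(* A Ferrers board with n columns is a weakly increasing sequence of column
   heights B = [:: b_1; ...; b_n] (column i, 0-based here, has rows 0..b_i - 1). *)
Definition ferrers (B : seq nat) : bool := sorted leq B.

Definition maxh (B : seq nat) : nat := \max_(b <- B) b.

(* Cells of B: (column i, row j) with j < b_i (row j stands for row j+1). *)
Definition cells (B : seq nat) : {set 'I_(size B) * 'I_(maxh B)} :=
  [set c : 'I_(size B) * 'I_(maxh B) | (nat_of_ord c.2 < nth 0 B c.1)%N].

Definition rook_placement (B : seq nat) (S : {set 'I_(size B) * 'I_(maxh B)}) : bool :=
  (S \subset cells B) &&
  [forall c in S, forall d in S, ((c.1 == d.1) || (c.2 == d.2)) ==> (c == d)].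

Definition rook_number (B : seq nat) (k : nat) : nat :=
  #|[set S | @rook_placement B S & #|S| == k]|.

Definition rook_equiv (B1 B2 : seq nat) : Prop :=
  forall k, rook_number B1 k = rook_number B2 k.

Definition rook_edge (n : nat) (B1 B2 : seq nat) : Prop :=
  exists i j k : nat, [/\ (i < n)%N, (j < n)%N, i <> j & (0 < k)%N] /\
    [/\ nth 0 B1 i = nth 0 B2 i + k, nth 0 B1 j + k = nth 0 B2 j &
    forall l, (l < n)%N -> l <> i -> l <> j -> nth 0 B1 l = nth 0 B2 l].

Definition root_vector (B : seq nat) : seq int :=
  [seq (i%:Z - (nth 0 B i)%:Z)%R | i <- iota 0 (size B)].

From mathcomp Require Import all_boot all_order all_algebra zify ring.
Set Implicit Arguments. Unset Strict Implicit. Unset Printing Implicit Defensive.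
Import GRing.Theory Num.Theory.

(* On a Ferrers board b_0 <= ... <= b_(n-1), a placement of two rooks is a
   cell (p, r) together with a cell of a later column q outside row r; since
   b_p <= b_q there are b_q - 1 such cells, so r_2 = sum_(p<q) b_p (b_q - 1).
   Completing squares, 2 r_2 only depends on n, on the number of cells and on
   the sum of the squares of the entries xi_p = p - b_p of the root vector.
   Along an edge, k cells move from column j to column i: the number of cells
   is unchanged, xi_i decreases by k and xi_j increases by k, so equality of
   r_2 gives (xi_i - k)^2 + (xi_j + k)^2 = xi_i^2 + xi_j^2, i.e.
   xi_i - k = xi_j: the two entries have been swapped. *)

Lemma sum_ord_ltn (m b : nat) : \sum_(s < m) (s < b : nat) = minn b m.
Proof.
elim: m => [|m IHm]; first by rewrite big_ord0 minn0.
by rewrite big_ord_recr /= IHm; case: (ltnP m b) => /=; lia.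
Qed.

Lemma sum_ord_ltn_neq (m b : nat) (r : 'I_m) : b <= m -> r < b ->
  \sum_(s < m) ((s < b) && (r != s) : nat) = b.-1.
Proof.
move=> le_bm lt_rb; rewrite (bigD1 r) //= eqxx andbF add0n.
have := sum_ord_ltn m b; rewrite (minn_idPl le_bm) (bigD1 r) //= lt_rb add1n.
move=> /(congr1 predn) /= <-.
by apply: eq_bigr => s neq_sr; rewrite eq_sym neq_sr andbT.
Qed.

Lemma eq_swap_seq (T : Type) (x0 : T) (x y : seq T) (n i j : nat) :
  size y = n -> i < n -> j < n ->
  nth x0 y i = nth x0 x j -> nth x0 y j = nth x0 x i ->
  (forall l, l < n -> l <> i -> l <> j -> nth x0 x l = nth x0 y l) ->
  y = [seq nth x0 x (if l == i then j else if l == j then i else l) | l <- iota 0 n].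
Proof.
move=> size_y lt_in lt_jn yi yj eq_xy.
apply: (@eq_from_nth _ x0); first by rewrite size_map size_iota.
move=> l; rewrite size_y => lt_ln; rewrite (nth_map 0) ?size_iota // nth_iota // add0n.
by case: eqP => [-> | neq_li] //; case: eqP => [-> | neq_lj] //; exact/esym/eq_xy.
Qed.

Section SumIdentities.
Local Open Scope ring_scope.

Lemma mul2_sum_ltn_pairs (R : comRingType) (b : nat -> R) (n : nat) :
  2 * \sum_(q < n) \sum_(p < q) b p * (b q - 1) =
  (\sum_(p < n) b p) ^+ 2 - 2 * (n%:R - 1) * \sum_(p < n) b p
  - \sum_(p < n) (p%:R - b p) ^+ 2 + \sum_(p < n) p%:R ^+ 2.
Proof.
elim: n => [|n IHn]; first by rewrite !big_ord0; ring.
rewrite !big_ord_recr /= mulrDr IHn -big_distrl /= -(addn1 n) natrD.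
ring.
Qed.

Lemma sumrB_two_changes (V : zmodType) (f g : nat -> V) (n i j : nat) :
  (i < n)%N -> (j < n)%N -> i <> j ->
  (forall l, (l < n)%N -> l <> i -> l <> j -> f l = g l) ->
  \sum_(l < n) f l - \sum_(l < n) g l = (f i - g i) + (f j - g j).
Proof.
move=> lt_in lt_jn neq_ij eq_fg; rewrite -sumrB (bigD1 (Ordinal lt_in)) //=.
rewrite (bigD1 (Ordinal lt_jn)) /=; last by apply/eqP => -[/esym].
rewrite big1 ?addr0 // => l /andP[/eqP neq_li /eqP neq_lj].
by rewrite eq_fg ?subrr // => eq_l; [apply: neq_li | apply: neq_lj]; exact: val_inj.
Qed.

Lemma sum_sqr_transfer (R : numDomainType) (x y : nat -> R) (n i j : nat) (k : R) :
  (i < n)%N -> (j < n)%N -> i <> j -> k != 0 ->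
  (forall l, (l < n)%N -> l <> i -> l <> j -> x l = y l) ->
  x i = y i - k -> x j = y j + k ->
  \sum_(l < n) x l ^+ 2 = \sum_(l < n) y l ^+ 2 ->
  [/\ y i = x j, y j = x i & x i != x j].
Proof.
move=> lt_in lt_jn neq_ij nz_k eq_xy xi xj eq_sum.
have eq_sqr l : (l < n)%N -> l <> i -> l <> j -> x l ^+ 2 = y l ^+ 2.
  by move=> lt_ln neq_li neq_lj; rewrite eq_xy.
have := sumrB_two_changes lt_in lt_jn neq_ij eq_sqr; rewrite eq_sum subrr xi xj.
have -> : (y i - k) ^+ 2 - y i ^+ 2 + ((y j + k) ^+ 2 - y j ^+ 2) =
          2 * k * (y j + k - y i) by ring.
move=> /esym/eqP; rewrite !mulf_eq0 pnatr_eq0 (negbTE nz_k) /= subr_eq0 => /eqP yi.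
rewrite -yi; split=> //; first by rewrite addrK.
by rewrite addrK eq_sym -subr_eq0 [y j + k]addrC addrK.
Qed.
End SumIdentities.

Section FerrersBoard.
Variable B : seq nat.
Local Notation cell := ('I_(size B) * 'I_(maxh B))%type.

Lemma nth_leq_maxh p : nth 0 B p <= maxh B.
Proof.
have [lt_pB|] := ltnP p (size B); last by move=> /(nth_default 0) ->.
by apply: leq_bigmax_seq => //; exact: mem_nth.
Qed.

Lemma rook_placement_set2 (c d : cell) : c != d ->
  rook_placement [set c; d] =
  [&& c \in cells B, d \in cells B, c.1 != d.1 & c.2 != d.2].
Proof.
move=> neq_cd; rewrite /rook_placement subUset !sub1set -!andbA.
congr [&& _, _ & _].
apply/forall_inP/andP => [nonatt | [neq1 neq2] u /set2P[] ->].
  have /forall_inP/(_ d (set22 c d)) := nonatt c (set21 c d).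
  by rewrite (negbTE neq_cd) implybF negb_or => /andP.
all: apply/forall_inP => v /set2P[] ->; rewrite ?eqxx ?implybT //.
all: by rewrite 1?[d.1 == _]eq_sym 1?[d.2 == _]eq_sym (negbTE neq1) (negbTE neq2).
Qed.

Definition nonattacking_pairs : {set cell * cell} :=
  [set x | [&& x.1 \in cells B, x.2 \in cells B, x.1.1 < x.2.1 & x.1.2 != x.2.2]].

Lemma rook_number2_pairs : rook_number B 2 = #|nonattacking_pairs|.
Proof.
have inj_set2 : {in nonattacking_pairs &, injective (fun x => [set x.1; x.2])}.
  move=> [c d] [c' d']; rewrite !inE /=.
  move=> /and4P[_ _ lt_cd _] /and4P[_ _ lt_cd' _] eq_S.
  have: c \in [set c'; d'] by rewrite -eq_S set21.
  have: d \in [set c'; d'] by rewrite -eq_S set22.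
  move=> {eq_S} /set2P[] eq_d /set2P[] eq_c; subst; rewrite ?ltnn // in lt_cd lt_cd'.
  by rewrite ltnNge ltnW in lt_cd'.
rewrite /rook_number -(card_in_imset inj_set2); apply: eq_card => S; rewrite !inE.
apply/andP/imsetP => [[placS /cards2P[c [d [neq_cd eq_S]]]] | [[c d]]].
  move: placS; rewrite eq_S rook_placement_set2 // => /and4P[cB dB neq1 neq2].
  case: (ltngtP c.1 d.1) => [lt_cd | lt_dc | /val_inj eq1].
  - by exists (c, d); rewrite // inE cB dB lt_cd neq2.
  - by exists (d, c); rewrite /= 1?setUC // inE dB cB lt_dc eq_sym neq2.
  - by rewrite eq1 eqxx in neq1.
rewrite inE /= => /and4P[cB dB lt_cd neq2] ->.
have neq1 : c.1 != d.1 by rewrite neq_ltn lt_cd.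
have neq_cd : c != d by apply: contraNneq neq1 => ->.
by rewrite rook_placement_set2 // cB dB neq1 neq2 cards2 neq_cd.
Qed.

Hypothesis ferrers_B : ferrers B.

Lemma ferrers_nth_leq p q : p <= q -> q < size B -> nth 0 B p <= nth 0 B q.
Proof.
move=> le_pq lt_qB; apply: (sorted_leq_nth leq_trans leqnn) => //.
by rewrite inE (leq_ltn_trans le_pq lt_qB).
Qed.

Lemma card_nonattacking_pairs :
  #|nonattacking_pairs| = \sum_(q < size B) \sum_(p < q) nth 0 B p * (nth 0 B q - 1).
Proof.
pose b p := nth 0 B p.
pose F (p : 'I_(size B)) (r : 'I_(maxh B)) (q : 'I_(size B)) (s : 'I_(maxh B)) : nat :=
  [&& r < b p, s < b q, p < q & r != s].
transitivity (\sum_p \sum_r \sum_q \sum_s F p r q s).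
  transitivity (\sum_(c : cell) \sum_(d : cell) ((c, d) \in nonattacking_pairs : nat)).
    by rewrite -sum1_card big_mkcond pair_bigA; apply: eq_bigr => -[c d].
  rewrite (pair_bigA _ (fun p r => \sum_q \sum_s F p r q s)); apply: eq_bigr => -[p r] _.
  rewrite (pair_bigA _ (F p r)); apply: eq_bigr => -[q s] _.
  by rewrite !inE /=.
transitivity (\sum_(p < size B) \sum_(q < size B) ((p < q) : nat) * (b p * (b q - 1))).
  apply: eq_bigr => p _; rewrite exchange_big; apply: eq_bigr => q _.
  have [lt_pq | le_qp] := ltnP p q; last first.
    rewrite big1 // => r _; rewrite big1 // => s _.
    by rewrite /F (leq_gtF le_qp) /= !andbF.
  rewrite mul1n -[b p in RHS](minn_idPl (nth_leq_maxh p)) -sum_ord_ltn big_distrl /=.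
  apply: eq_bigr => r _; have [lt_rp | le_pr] := ltnP r (b p); last first.
    by rewrite mul0n big1 // => s _; rewrite /F (leq_gtF le_pr).
  have lt_rq : r < b q.
    exact: leq_trans lt_rp (ferrers_nth_leq (ltnW lt_pq) (ltn_ord q)).
  rewrite mul1n subn1 -(sum_ord_ltn_neq (nth_leq_maxh q) lt_rq).
  by apply: eq_bigr => s _; rewrite /F lt_rp lt_pq.
rewrite exchange_big; apply: eq_bigr => q _.
rewrite (big_ord_widen _ (fun p => b p * (b q - 1)) (ltnW (ltn_ord q))).
by rewrite [RHS]big_mkcond; apply: eq_bigr => p _; case: (p < q); rewrite ?mul1n.
Qed.
End FerrersBoard.

Section RootVector.
Local Open Scope ring_scope.

Lemma size_root_vector (B : seq nat) : size (root_vector B) = size B.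
Proof. by rewrite size_map size_iota. Qed.

Lemma nth_root_vector (B : seq nat) l : (l < size B)%N ->
  (root_vector B)`_l = l%:Z - (nth 0%N B l)%:Z.
Proof. by move=> lt_lB; rewrite (nth_map 0%N) ?size_iota // nth_iota. Qed.

Lemma rook_number2_root_vector (B : seq nat) : ferrers B ->
  2 * (rook_number B 2)%:Z =
  (\sum_(p < size B) (nth 0%N B p)%:Z) ^+ 2
  - 2 * ((size B)%:R - 1) * \sum_(p < size B) (nth 0%N B p)%:Z
  - \sum_(p < size B) (root_vector B)`_p ^+ 2 + \sum_(p < size B) p%:R ^+ 2.
Proof.
move=> ferrers_B.
have -> : (rook_number B 2)%:Z =
    \sum_(q < size B) \sum_(p < q) (nth 0%N B p)%:Z * ((nth 0%N B q)%:Z - 1).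
  rewrite rook_number2_pairs card_nonattacking_pairs // -natz natr_sum.
  apply: eq_bigr => q _; rewrite natr_sum; apply: eq_bigr => p _.
  have := ferrers_nth_leq ferrers_B (ltnW (ltn_ord p)) (ltn_ord q).
  rewrite natz; nia.
rewrite (mul2_sum_ltn_pairs (fun p => (nth 0%N B p)%:Z)).
congr (_ - _ + _).
by apply: eq_bigr => p _; rewrite nth_root_vector // natz.
Qed.

Lemma sum_sqr_root_vector_eq (n : nat) (B1 B2 : seq nat) :
  size B1 = n -> size B2 = n -> ferrers B1 -> ferrers B2 ->
  rook_number B1 2 = rook_number B2 2 ->
  \sum_(l < n) (nth 0%N B1 l)%:Z = \sum_(l < n) (nth 0%N B2 l)%:Z ->
  \sum_(l < n) (root_vector B1)`_l ^+ 2 = \sum_(l < n) (root_vector B2)`_l ^+ 2.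
Proof.
move=> <- size_B2 ferrers_B1 ferrers_B2 eq_r2 eq_cells.
have := rook_number2_root_vector ferrers_B2; have := rook_number2_root_vector ferrers_B1.
by rewrite size_B2 eq_r2 eq_cells => ->; lia.
Qed.
End RootVector.

Theorem theorem6 (n : nat) (B1 B2 : seq nat) :
  size B1 = n -> size B2 = n -> ferrers B1 -> ferrers B2 ->
  rook_equiv B1 B2 -> rook_edge n B1 B2 ->
  exists i1 i2 : nat,
    [/\ (i1 < i2)%N, (i2 < n)%N,
        nth 0%R (root_vector B1) i1 != nth 0%R (root_vector B1) i2 &
        root_vector B2 =
          [seq nth 0%R (root_vector B1)
                 (if k == i1 then i2 else if k == i2 then i1 else k)
          | k <- iota 0 n]].
Proof.
move=> size_B1 size_B2 ferrers_B1 ferrers_B2 eq_r.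
move=> [i [j [k [[lt_in lt_jn neq_ij k_gt0] [B1_i B1_j eq_B]]]]].
have sum_B : (\sum_(l < n) (nth 0%N B1 l)%:Z = \sum_(l < n) (nth 0%N B2 l)%:Z)%R.
  have := sumrB_two_changes lt_in lt_jn neq_ij
    (fun l lt_ln neq_li neq_lj => congr1 Posz (eq_B l lt_ln neq_li neq_lj)).
  by rewrite B1_i -B1_j => /eqP; rewrite subr_eq => /eqP ->; rewrite !PoszD; ring.
have sum_sqr :=
  sum_sqr_root_vector_eq size_B1 size_B2 ferrers_B1 ferrers_B2 (eq_r 2) sum_B.
have agree l : (l < n)%N -> l <> i -> l <> j ->
    nth 0%R (root_vector B1) l = nth 0%R (root_vector B2) l.
  by move=> lt_ln neq_li neq_lj; rewrite !nth_root_vector ?size_B1 ?size_B2 // eq_B.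
have xi_i : nth 0%R (root_vector B1) i = (nth 0%R (root_vector B2) i - k%:Z)%R.
  by rewrite !nth_root_vector ?size_B1 ?size_B2 // B1_i PoszD opprD addrA.
have xi_j : nth 0%R (root_vector B1) j = (nth 0%R (root_vector B2) j + k%:Z)%R.
  by rewrite !nth_root_vector ?size_B1 ?size_B2 // -B1_j PoszD opprD addrA subrK.
have nz_k : (k%:Z != 0)%R by rewrite eqz_nat -lt0n.
have [eq_i eq_j neq_x] :=
  sum_sqr_transfer lt_in lt_jn neq_ij nz_k agree xi_i xi_j sum_sqr.
have size_rv : size (root_vector B2) = n by rewrite size_root_vector.
case: (ltngtP i j) => [lt_ij | lt_ji | /neq_ij []].
- by exists i, j; split; last exact: eq_swap_seq.
- exists j, i; split; rewrite 1?eq_sym //.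
  by apply: eq_swap_seq => // l lt_ln neq_lj neq_li; exact: agree.
Qed.
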